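(* Let $T_0$ be an unrooted binary phylogenetic tree on $n$ leaves. There is an NNI-walk of length $O(n^2)$ that visits every tree of the SPR neighborhood $N_{SPR}(T_0)$. *)

From mathcomp Require Import all_boot all_fingroup.
Set Implicit Arguments. Unset Strict Implicit. Unset Printing Implicit Defensive.

(* Vertex set of an unrooted binary phylogenetic tree on n leaves:
   n leaves + (n-2) internal vertices.  Vertex i with i < n is the leaf
   labelled i; vertices n .. 2n-3 are the (unlabelled) internal vertices. *)
Definition V (n : nat) : nat := n + (n - 2).
Definition vtx (n : nat) := 'I_(V n).

Definition deg (n : nat) (e : rel (vtx n)) (v : vtx n) : nat :=
  #|[pred w | e v w]|.

(* A (concrete) unrooted binary phylogenetic tree on leaf set {0..n-1}:
   a simple connected graph in which leaves have degree 1 and internal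
   vertices degree 3 (connected with #V-1 edges, hence a tree). *)
Definition phylo_tree (n : nat) (e : rel (vtx n)) : Prop :=
  [/\ symmetric e, irreflexive e,
      (forall v : vtx n, deg e v = if v < n then 1 else 3)
    & (forall u v : vtx n, connect e u v)].

(* Equality of phylogenetic trees: isomorphism fixing every leaf label. *)
Definition tree_iso (n : nat) (e e' : rel (vtx n)) : Prop :=
  exists f : {perm vtx n},
    (forall v : vtx n, v < n -> f v = v) /\
    (forall u v : vtx n, e' (f u) (f v) = e u v).

Definition del_edge (T : eqType) (x y : T) (e : rel T) : rel T :=
  fun p q => e p q && ~~ (((p == x) && (q == y)) || ((p == y) && (q == x))).
Definition add_edge (T : eqType) (x y : T) (e : rel T) : rel T :=
  fun p q => [|| e p q, (p == x) && (q == y) | (p == y) && (q == x)].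

(* NNI move across the internal edge {u,v}: swap a subtree b hanging at u
   (b <> v) with a subtree c hanging at v (c <> u). *)
Definition nni (n : nat) (e e' : rel (vtx n)) : Prop :=
  exists u v b c : vtx n,
    [/\ n <= u, n <= v, e u v,
        [/\ e u b, b != v, e v c & c != u] &
        tree_iso (add_edge u c (add_edge v b (del_edge u b (del_edge v c e)))) e'].

(* SPR move: the subtree containing p, attached at the internal vertex u
   (whose other neighbours are x and y), is pruned; u is suppressed
   (edge {x,y} created); then the pruned subtree is regrafted, via u,
   onto an edge {a,b} of the remaining component. *)
Definition spr (n : nat) (e e' : rel (vtx n)) : Prop :=
  exists u p x y a b : vtx n,
    let e1 := add_edge x y (del_edge u x (del_edge u y e)) in
    [/\ n <= u, [/\ e u p, e u x & e u y], [/\ p != x, p != y & x != y],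
        [/\ e1 a b & connect (del_edge u p e1) x a] &
        tree_iso (add_edge u a (add_edge u b (del_edge a b e1))) e'].

Definition in_spr_nbhd (n : nat) (T0 T : rel (vtx n)) : Prop := spr T0 T.

(* An NNI-walk: a nonempty sequence of trees, consecutive ones related by
   an NNI move.  Its length is the number of moves, (size w).-1. *)
Definition nni_walk (n : nat) (w : seq (rel (vtx n))) : Prop :=
  (0 < size w)%N /\
  (forall i, (i < size w)%N -> phylo_tree (nth (fun _ _ => false) w i)) /\
  (forall i, (i.+1 < size w)%N ->
     nni (nth (fun _ _ => false) w i) (nth (fun _ _ => false) w i.+1)).

Definition visits (n : nat) (w : seq (rel (vtx n))) (T : rel (vtx n)) : Prop :=
  exists2 i, (i < size w)%N & tree_iso (nth (fun _ _ => false) w i) T.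

(* An SPR move is described by a pruning (u; p, x, y): u is an internal
   vertex with neighbours p, x, y; the subtree on the p side stays attached
   to u, u is removed from the path x - u - y, and the result is regrafted by
   inserting u into an edge {a,b} of the component of x.  The key observation
   is that inserting u into two adjacent edges {a,b}, {b,c} gives trees one
   NNI move apart (across {u,b}).  Hence a closed walk in the line graph of
   the x-component (at most 4n edges), which exists of length at most
   2 * 4n by a depth-first traversal, gives a closed NNI-walk from T0 (the
   regrafting onto {x,y}) of length at most 8n through all regraftings of
   that pruning.  There are at most 27 |V| <= 54n prunings, and chaining
   their walks gives a walk of length at most 432 n^2. *)
From mathcomp Require Import all_boot all_fingroup zify.
From Stdlib Require Import FunctionalExtensionality.
Set Implicit Arguments. Unset Strict Implicit. Unset Printing Implicit Defensive.

Lemma rel_ext (T : Type) (r s : rel T) : (forall p q, r p q = s p q) -> r = s.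
Proof.
move=> rs; apply: functional_extensionality => p.
by apply: functional_extensionality => q; exact: rs.
Qed.

Lemma connect_invariant (T : finType) (e : rel T) (D : pred T) :
  (forall v w, D v -> e v w -> D w) -> forall s t, D s -> connect e s t -> D t.
Proof.
move=> De s t Ds /connectP [q eq ->]; elim: q s Ds eq => [|w q IH] s Ds //=.
by case/andP=> esw eq; exact: IH (De _ _ Ds esw) eq.
Qed.

Section EdgeSurgery.
Variable T : eqType.
Implicit Types (e : rel T) (x y : T).

Lemma del_edge_sym e x y : symmetric e -> symmetric (del_edge x y e).
Proof.
move=> es p q; rewrite /del_edge es; congr (_ && ~~ _).
by case: (p == x) (q == y) (p == y) (q == x) => [] [] [] [].
Qed.

Lemma add_edge_sym e x y : symmetric e -> symmetric (add_edge x y e).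
Proof.
move=> es p q; rewrite /add_edge es; congr (_ || _).
by case: (p == x) (q == y) (p == y) (q == x) => [] [] [] [].
Qed.

Lemma del_edge_irr e x y : irreflexive e -> irreflexive (del_edge x y e).
Proof. by move=> ei p; rewrite /del_edge ei. Qed.

Lemma add_edge_irr e x y : x != y -> irreflexive e -> irreflexive (add_edge x y e).
Proof.
move=> xy ei p; rewrite /add_edge ei /=.
by apply/negP=> /orP[] /andP[/eqP-> /eqP E]; move: xy; rewrite E eqxx.
Qed.

End EdgeSurgery.

(* If every edge of e other than {x,y} is bridged in e', and x, y are
   connected in e', then e' connects everything e does: this is how
   connectivity survives the local edge exchanges. *)
Lemma connect_del_edge (T : finType) (e e' : rel T) x y :
  symmetric e' -> (forall p q, del_edge x y e p q -> connect e' p q) ->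
  connect e' x y -> subrel (connect e) (connect e').
Proof.
move=> es' sub cxy; apply: connect_sub => p q epq.
case exy: (((p == x) && (q == y)) || ((p == y) && (q == x))).
  by case/orP: exy => /andP[/eqP-> /eqP->]; rewrite // (sym_connect_sym es').
by apply: sub; rewrite /del_edge epq exy.
Qed.

Section Degrees.
Variables (n : nat) (e : rel (vtx n)) (x y : vtx n).
Hypotheses (e_sym : symmetric e) (xy : x != y).

Lemma deg_del_edge w : e x y ->
  deg (del_edge x y e) w + (w == x) + (w == y) = deg e w.
Proof.
move=> exy; rewrite /deg.
have [->|wx] := eqVneq w x.
  rewrite (cardD1 y [pred z | e x z]) inE exy (negbTE xy) addn0 addn1 add1n.
  congr _.+1; apply: eq_card => z.
  by rewrite !inE /del_edge eqxx (negbTE xy) /= orbF andbC.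
have [->|wy] := eqVneq w y.
  rewrite (cardD1 x [pred z | e y z]) inE e_sym exy addn0 addn1.
  congr _.+1; apply: eq_card => z.
  by rewrite !inE /del_edge eqxx eq_sym (negbTE xy) /= andbC.
rewrite !addn0; apply: eq_card => z.
by rewrite !inE /del_edge (negbTE wx) (negbTE wy) /= andbT.
Qed.

Lemma deg_add_edge w : ~~ e x y ->
  deg (add_edge x y e) w = deg e w + (w == x) + (w == y).
Proof.
move=> nexy; rewrite /deg.
have [->|wx] := eqVneq w x.
  rewrite (negbTE xy) addn0 addn1 -(@eq_card _ [predU1 y & [pred z | e x z]]).
    by rewrite cardU1 inE (negbTE nexy).
  by move=> z; rewrite !inE /add_edge eqxx (negbTE xy) /= orbF orbC.
have [->|wy] := eqVneq w y.
  rewrite addn0 addn1 -(@eq_card _ [predU1 x & [pred z | e y z]]).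
    by rewrite cardU1 inE e_sym (negbTE nexy).
  by move=> z; rewrite !inE /add_edge eqxx [y == x]eq_sym (negbTE xy) /= orbC.
rewrite !addn0; apply: eq_card => z.
by rewrite !inE /add_edge (negbTE wx) (negbTE wy) /= orbF.
Qed.

End Degrees.

Lemma grow_connected (T : finType) (r : rel T) (A : {set T}) s (P : {set T} -> Prop) :
  (forall t, t \in A -> connect r s t) -> (forall p q, p \in A -> r p q -> q \in A) ->
  s \in A -> P [set s] ->
  (forall (B : {set T}) b t, B \subset A -> b \in B -> t \in A :\: B -> r b t -> P B -> P (t |: B)) ->
  P A.
Proof.
move=> A_conn A_closed sA Ps Pgrow.
have saturated (B : {set T}) : B \subset A -> s \in B ->
    (forall q : T * T, [&& q.1 \in B, q.2 \in A :\: B & r q.1 q.2] = false) -> B = A.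
  move=> BA sB no_exit; apply/eqP; rewrite eqEsubset BA; apply/subsetP => z zA.
  apply: (connect_invariant _ sB (A_conn z zA)) => v w vB rvw.
  have {}vB : v \in B := vB; apply/negPn/negP => wB; move: (no_exit (v, w)).
  by rewrite /= vB rvw !inE wB (A_closed v w (subsetP BA v vB) rvw).
suff grow (k : nat) (B : {set T}) : #|A :\: B| <= k -> B \subset A -> s \in B -> P B -> P A.
  by apply: (grow #|A| [set s]); rewrite ?subset_leq_card ?subsetDl ?sub1set ?set11.
elim: k B => [|k IH] B le_k BA sB PB;
  have [[b t] /= /and3P[bB tAB rbt] | no_exit] :=
    pickP [pred q : T * T | [&& q.1 \in B, q.2 \in A :\: B & r q.1 q.2]];
  try by rewrite -(saturated B BA sB no_exit).
- by move: le_k; rewrite leqn0 cards_eq0 => /eqP AB0; move: tAB; rewrite AB0 inE.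
- apply: (IH (t |: B)).
  + rewrite -ltnS; apply: leq_trans le_k; apply: proper_card; apply/properP.
    split; first by apply: setDS; apply: subsetUr.
    by exists t => //; rewrite !inE eqxx.
  + by rewrite subUset sub1set BA; case/setDP: tAB => ->.
  + by rewrite inE sB orbT.
  + exact: Pgrow BA bB tAB rbt PB.
Qed.

(* The arcs (ordered adjacent pairs) of a relation: twice its edges when it
   is symmetric.  Counting arcs is how we show that tree edges are bridges. *)
Definition arcs (T : finType) (e : rel T) : {set T * T} := [set q | e q.1 q.2].

Lemma card_arcs (T : finType) (e : rel T) : #|arcs e| = \sum_v #|[pred w | e v w]|.
Proof.
rewrite -sum1_card (eq_bigr (fun v => \sum_(w | e v w) 1)) => [|v _]; last first.
  by rewrite -sum1_card.
by rewrite pair_big_dep /=; apply: eq_bigl => q; rewrite inE.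
Qed.

Lemma card_arcs_del_edge (T : finType) (e : rel T) x y :
  e x y -> e y x -> x != y -> #|arcs e| = (#|arcs (del_edge x y e)|).+2.
Proof.
move=> exy eyx xy.
have -> : arcs e = [set (x, y); (y, x)] :|: arcs (del_edge x y e).
  apply/setP => -[p q]; rewrite !inE /del_edge /= !xpair_eqE.
  by repeat (case: eqP => [?|?]; subst => //=); rewrite ?exy ?eyx ?andbT ?orbF.
rewrite cardsU cards2 xpair_eqE (negbTE xy) /=.
suff -> : [set (x, y); (y, x)] :&: arcs (del_edge x y e) = set0 by rewrite cards0 subn0.
apply/setP => -[p q]; rewrite !inE /del_edge /= !xpair_eqE.
by case: (p == x) (q == y) (p == y) (q == x) => [] [] [] []; rewrite ?andbF.
Qed.

(* A connected symmetric relation on T has at least 2(|T| - 1) arcs: grow a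
   vertex set along edges, each new vertex bringing its two attaching arcs. *)
Lemma connected_arcs_lb (T : finType) (e : rel T) s : symmetric e ->
  (forall t, connect e s t) -> 2 * (#|T| - 1) <= #|arcs e|.
Proof.
move=> es e_conn.
pose inner (B : {set T}) := [set q in arcs e | (q.1 \in B) && (q.2 \in B)].
suff : 2 * (#|[set: T]| - 1) <= #|inner [set: T]|.
  rewrite cardsT => /leq_trans; apply; apply: subset_leq_card.
  by apply/subsetP => q; rewrite inE => /andP[].
apply: (@grow_connected T e _ s (fun B => 2 * (#|B| - 1) <= #|inner B|)) => //.
- by rewrite cards1.
move=> B b t _ bB /setDP[_ tB] ebt le_inner.
have tb : t != b by apply: contraNneq tB => ->.
have new_arcs : #|(b, t) |: ((t, b) |: inner B)| = (#|inner B|).+2.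
  by rewrite !cardsU1 !inE !xpair_eqE (negbTE tb) /= (negbTE tB) !andbF.
apply: (@leq_trans #|(b, t) |: ((t, b) |: inner B)|).
  rewrite new_arcs cardsU1 tB add1n subSS subn0.
  have : 0 < #|B| by apply/card_gt0P; exists b.
  by move: le_inner; case: #|B| => // k; rewrite subSS subn0 mulnS.
apply: subset_leq_card; apply/subsetP => -[p q]; rewrite !inE !xpair_eqE /=.
case/or3P => [/andP[/eqP-> /eqP->] | /andP[/eqP-> /eqP->] | /and3P[-> -> ->]].
- by rewrite ebt eqxx bB orbT.
- by rewrite es ebt eqxx bB orbT.
- by rewrite !orbT.
Qed.

Lemma closed_cover_walk (T : finType) (r : rel T) (A : {set T}) s :
  symmetric r -> (forall t, t \in A -> connect r s t) ->
  (forall p q, p \in A -> r p q -> q \in A) -> s \in A ->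
  exists l, [/\ path r s l, last s l = s, size l <= 2 * (#|A| - 1) & {subset A <= s :: l}].
Proof.
move=> rs A_conn A_closed sA.
apply: (grow_connected (P := fun B => exists l, [/\ path r s l, last s l = s,
  size l <= 2 * (#|B| - 1) & {subset B <= s :: l}]) A_conn A_closed sA).
  by exists [::]; split => // t; rewrite !inE.
move=> B b t _ bB /setDP[_ tB] rbt [l [walk_l last_l size_l cover_l]].
have rtb : r t b by rewrite rs.
have size_ok : size l + 2 <= 2 * (#|t |: B| - 1).
  rewrite cardsU1 tB add1n subSS subn0.
  have : 0 < #|B| by apply/card_gt0P; exists b.
  by move: size_l; case: #|B| => // k; rewrite subSS subn0 mulnS addnC leq_add2l.
have cover_t (l' : seq T) : {subset s :: l <= l'} -> t \in l' -> {subset t |: B <= l'}.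
  by move=> sub tl' z; rewrite !inE => /orP[/eqP-> // | /cover_l/sub].
have := cover_l b bB; rewrite inE => /orP[/eqP bs | bl].
  rewrite {}bs in rbt rtb; exists [:: t, s & l]; rewrite /= rbt rtb.
  split => //; first by rewrite addn2 in size_ok.
  apply: cover_t; last by rewrite !inE eqxx orbT.
  by move=> z; rewrite !inE => /orP[-> | ->]; rewrite ?orbT.
move: walk_l last_l size_ok cover_t; case/splitPr: bl => l1 l2 walk_l last_l size_ok cover_t.
exists (l1 ++ [:: b, t, b & l2]); split.
- by move: walk_l; rewrite !cat_path /= => /andP[-> /andP[-> ->]]; rewrite rbt rtb.
- by move: last_l; rewrite !last_cat.
- by move: size_ok; rewrite !size_cat /= !addnS addn0.
- apply: cover_t; last by rewrite !(inE, mem_cat) eqxx !orbT.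
  by move=> z; rewrite !(inE, mem_cat) => /or4P[] ->; rewrite ?orbT.
Qed.

Section PhyloTree.
Variables (n : nat) (e : rel (vtx n)).
Hypotheses (n2 : 2 <= n) (tree_e : phylo_tree e).

Let e_sym : symmetric e. Proof. by case: tree_e. Qed.
Let e_irr : irreflexive e. Proof. by case: tree_e. Qed.
Let e_deg : forall v, deg e v = if v < n then 1 else 3. Proof. by case: tree_e. Qed.
Let e_conn : forall u v, connect e u v. Proof. by case: tree_e. Qed.

Lemma adj_neq u v : e u v -> u != v.
Proof. by apply: contraTneq => ->; rewrite e_irr. Qed.

(* Handshake count: n leaves of degree 1 and n - 2 internal vertices of degree 3. *)
Lemma card_arcs_phylo : #|arcs e| = n + 3 * (n - 2).
Proof.
rewrite card_arcs (eq_bigr (fun v : vtx n => if v < n then 1 else 3)) => [|v _]; last first.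
  exact: e_deg.
rewrite -(big_mkord xpredT (fun i => if i < n then 1 else 3)) /V.
rewrite (@big_cat_nat _ _ _ n) ?leq_addr //=.
rewrite (@eq_big_nat _ _ _ 0 n _ (fun _ => 1)) => [|i /andP[_ ->] //].
rewrite (@eq_big_nat _ _ _ n (n + (n - 2)) _ (fun _ => 3)) => [|i /andP[ni _]]; last first.
  by rewrite ltnNge ni.
by rewrite !sum_nat_const_nat subn0 addKn muln1 mulnC.
Qed.

(* Every edge of a tree is a bridge: the arc count 2(|V| - 1) is exactly the
   minimum for a connected graph, so no edge can be removed. *)
Lemma phylo_bridge s t : e s t -> ~~ connect (del_edge s t e) s t.
Proof.
move=> est; apply/negP => cst.
have del_conn w : connect (del_edge s t e) s w.
  apply: (connect_del_edge (e := e) (del_edge_sym s t e_sym) _ cst (e_conn s w)).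
  by move=> p q; exact: connect1.
have := connected_arcs_lb (del_edge_sym s t e_sym) del_conn.
have ets : e t s by rewrite e_sym.
have := card_arcs_phylo; rewrite (card_arcs_del_edge est ets (adj_neq est)).
by rewrite card_ord /V; move: #|arcs _| => k; lia.
Qed.

Lemma phylo_no_triangle u v w : e u v -> e u w -> e w v -> False.
Proof.
move=> euv euw ewv; move/negP: (phylo_bridge euv); apply.
have uv := adj_neq euv; have uw := adj_neq euw; have wv := adj_neq ewv.
apply: (@connect_trans _ _ w); apply: connect1; rewrite /del_edge ?euw ?ewv eqxx /=.
  by rewrite (negbTE uv) (negbTE wv).
by rewrite [w == u]eq_sym (negbTE uw) (negbTE wv).
Qed.

Lemma leaf_neighbor_uniq (a z1 z2 : vtx n) : a < n -> e a z1 -> e a z2 -> z1 = z2.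
Proof.
move=> an ez1 ez2; apply/eqP/negPn/negP => z12.
have : size [:: z1; z2] <= deg e a.
  rewrite /deg cardE uniq_leq_size ?enum_uniq //= ?inE ?z12 // => z.
  by rewrite !inE mem_enum => /orP[] /eqP->.
by rewrite e_deg an.
Qed.

Lemma internal_neighbors (u a b c z : vtx n) : n <= u -> e u a -> e u b -> e u c ->
  a != b -> a != c -> b != c -> e u z -> z \in [:: a; b; c].
Proof.
move=> nu ea eb ec ab ac bc ez; apply/negPn/negP => zabc.
have : size [:: z; a; b; c] <= deg e u.
  rewrite /deg cardE; apply: uniq_leq_size => [|w]; last first.
    by rewrite !inE mem_enum => /or4P[] /eqP->.
  by move: zabc; rewrite /= !inE !negb_or => /and3P[-> -> ->]; rewrite ab ac bc.
by rewrite e_deg ltnNge nu.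
Qed.

(* An NNI move across the internal edge {u,v} yields a phylogenetic tree:
   degrees are preserved by the edge exchange, and connectivity survives
   because each deleted edge is bypassed through the new ones. *)
Lemma nni_surgery_phylo u v b c : e u v -> e u b -> b != v -> e v c -> c != u ->
  phylo_tree (add_edge u c (add_edge v b (del_edge u b (del_edge v c e)))).
Proof.
move=> euv eub bv evc cu.
have ub := adj_neq eub; have uv := adj_neq euv; have vc := adj_neq evc.
have vb : v != b by rewrite eq_sym. have uc : u != c by rewrite eq_sym.
have nuc : ~~ e u c by apply/negP => euc; apply: (phylo_no_triangle euv euc); rewrite e_sym.
have nvb : ~~ e v b by apply/negP => evb; apply: (phylo_no_triangle euv eub); rewrite e_sym.
set e1 := del_edge v c e; set e2 := del_edge u b e1; set e3 := add_edge v b e2.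
set e4 := add_edge u c e3.
have s1 : symmetric e1 := del_edge_sym v c e_sym.
have s2 : symmetric e2 := del_edge_sym u b s1.
have s3 : symmetric e3 := add_edge_sym v b s2.
have s4 : symmetric e4 := add_edge_sym u c s3.
have e1ub : e1 u b by rewrite /e1 /del_edge eub (negbTE uv) (negbTE uc).
have ne2vb : ~~ e2 v b by rewrite /e2 /e1 /del_edge (negbTE nvb).
have ne3uc : ~~ e3 u c.
  by rewrite /e3 /e2 /e1 /add_edge /del_edge (negbTE nuc) /= (negbTE uv) (negbTE ub).
have e4_e2 p q : e2 p q -> e4 p q by rewrite /e4 /e3 /add_edge => ->.
have e4uv : e4 u v.
  apply: e4_e2; rewrite /e2 /e1 /del_edge euv (negbTE uv) (negbTE uc) (negbTE vb).
  by rewrite [v == u]eq_sym (negbTE uv) !andbF.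
have e4vb : e4 v b by rewrite /e4 /e3 /add_edge !eqxx !orbT.
have e4uc : e4 u c by rewrite /e4 /add_edge !eqxx !orbT.
split.
- exact: s4.
- exact: add_edge_irr uc (add_edge_irr vb (del_edge_irr _ _ (del_edge_irr _ _ e_irr))).
- move=> w; rewrite -e_deg /e4 deg_add_edge // /e3 deg_add_edge // -/e2.
  rewrite -(deg_del_edge e_sym vc w evc) -(deg_del_edge s1 ub w e1ub) -/e2.
  by move: (deg e2 w) => k; case: (w == v); case: (w == b); case: (w == u);
    case: (w == c); rewrite /= ?addn0 ?addn1 ?addnS ?addSn.
- have e1_e4 : subrel (connect e1) (connect e4).
    apply: (connect_del_edge s4 (fun p q h => connect1 (e4_e2 p q h))).
    exact: connect_trans (connect1 e4uv) (connect1 e4vb).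
  have e_e4 : subrel (connect e) (connect e4).
    apply: (connect_del_edge s4 (fun p q h => e1_e4 p q (connect1 h))).
    by apply: connect_trans (connect1 _) (connect1 e4uc); rewrite s4.
  by move=> p q; exact: e_e4 (e_conn p q).
Qed.

End PhyloTree.

Lemma tree_iso_refl n (e : rel (vtx n)) : tree_iso e e.
Proof. by exists 1%g; split => *; rewrite !perm1. Qed.

Lemma iso_phylo n (e e' : rel (vtx n)) : tree_iso e e' -> phylo_tree e -> phylo_tree e'.
Proof.
case=> f [f_leaf f_edge] [e_sym e_irr e_deg e_conn].
have e'E a b : e' a b = e ((f^-1)%g a) ((f^-1)%g b) by rewrite -f_edge !permKV.
split.
- by move=> a b; rewrite !e'E e_sym.
- by move=> a; rewrite e'E e_irr.
- move=> v; rewrite /deg.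
  have -> : #|[pred w | e' v w]| = #|(f^-1)%g @^-1: [set w | e ((f^-1)%g v) w]|.
    by apply: eq_card => w; rewrite !inE e'E.
  rewrite card_preimset; last exact: perm_inj.
  have -> : #|[set w | e ((f^-1)%g v) w]| = deg e ((f^-1)%g v).
    by apply: eq_card => w; rewrite inE.
  rewrite e_deg; congr (if _ then _ else _).
  have [vn|nv] := ltnP v n; first by rewrite -{1}(f_leaf v vn) permK.
  apply/negP => fvn; have := f_leaf _ fvn; rewrite permKV => vE.
  by move: fvn; rewrite -vE ltnNge nv.
- move=> a b; rewrite -[a](permKV f) -[b](permKV f).
  apply: (connect_invariant (D := fun z => connect e' (f _) (f z)) _ (connect0 _ _) (e_conn _ _)).
  by move=> z z' cz ezz'; apply: connect_trans cz (connect1 _); rewrite f_edge.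
Qed.

Lemma nni_phylo n (e e' : rel (vtx n)) : 2 <= n -> phylo_tree e -> nni e e' -> phylo_tree e'.
Proof.
move=> n2 tree_e [u [v [b [c [_ _ euv [eub bv evc cu] iso]]]]].
exact: iso_phylo iso (nni_surgery_phylo n2 tree_e euv eub bv evc cu).
Qed.

Ltac split_vertex p u a b c :=
  case: (eqVneq p u) => [->|?]; [|case: (eqVneq p a) => [->|?];
    [|case: (eqVneq p b) => [->|?]; [|case: (eqVneq p c) => [->|?]]]].

Ltac simpl_eqs := repeat match goal with
  | H : is_true (?x != ?y) |- context [?x == ?y] => rewrite (negbTE H)
  | H : is_true (?x != ?y) |- context [?y == ?x] => rewrite [y == x]eq_sym (negbTE H)
  | |- context [?x == ?x] => rewrite eqxx
  end.

Lemma insert_vertex_comm (T : eqType) (f : rel T) u a b :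
  add_edge u a (add_edge u b (del_edge a b f)) = add_edge u b (add_edge u a (del_edge b a f)).
Proof.
apply: rel_ext => p q; rewrite /add_edge /del_edge.
by case: (p == u); case: (q == u); case: (p == a); case: (q == a); case: (p == b);
  case: (q == b); rewrite /= ?andbT ?orbF ?orbT ?andbF.
Qed.

Lemma insert_vertex_suppressed (T : eqType) (f : rel T) u x y :
  symmetric f -> f u x -> f u y -> f x y = false -> u != x -> u != y -> x != y ->
  add_edge u x (add_edge u y (del_edge x y (add_edge x y (del_edge u x (del_edge u y f))))) = f.
Proof.
move=> fs fux fuy fxy ux uy xy.
have fxu : f x u by rewrite fs. have fyu : f y u by rewrite fs.
have fyx : f y x = false by rewrite fs.
apply: rel_ext => p q; rewrite /add_edge /del_edge.
split_vertex p u x y y; split_vertex q u x y y; simpl_eqs;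
  by rewrite /= ?fux ?fuy ?fxy ?fxu ?fyu ?fyx /= ?andbT ?orbF ?orbT ?andbF.
Qed.

(* Sliding an inserted vertex u from the edge {a,b} to the adjacent edge
   {b,c} is the NNI move across {u,b} exchanging a (at u) and c (at b). *)
Lemma slide_inserted_vertex (T : eqType) (f : rel T) u a b c : symmetric f ->
  f u a = false -> f u b = false -> f u c = false -> u != a -> u != b -> u != c ->
  a != b -> b != c -> a != c -> f a b -> f b c ->
  add_edge u c (add_edge b a (del_edge u a (del_edge b c
     (add_edge u a (add_edge u b (del_edge a b f)))))) =
  add_edge u b (add_edge u c (del_edge b c f)).
Proof.
move=> fs fua fub fuc ua ub uc ab bc ac fab fbc.
have fau : f a u = false by rewrite fs. have fbu : f b u = false by rewrite fs.
have fcu : f c u = false by rewrite fs. have fba : f b a by rewrite fs.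
have fcb : f c b by rewrite fs.
apply: rel_ext => p q; rewrite /add_edge /del_edge.
split_vertex p u a b c; split_vertex q u a b c; simpl_eqs;
  by rewrite /= ?fua ?fub ?fuc ?fau ?fbu ?fcu ?fab ?fba ?fbc ?fcb /= ?andbT ?orbF ?orbT ?andbF.
Qed.

Fixpoint prop_path (A : Type) (R : A -> A -> Prop) (a : A) (l : seq A) : Prop :=
  if l is b :: l' then R a b /\ prop_path R b l' else True.

Lemma prop_path_cat (A : Type) (R : A -> A -> Prop) a l1 l2 :
  prop_path R a l1 -> prop_path R (last a l1) l2 -> prop_path R a (l1 ++ l2).
Proof. by elim: l1 a => [|b l IH] a //= [Rab walk1] walk2; split => //; exact: IH. Qed.

Lemma prop_path_nth (A : Type) (R : A -> A -> Prop) a0 a l : prop_path R a l ->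
  forall i, i.+1 < size (a :: l) -> R (nth a0 (a :: l) i) (nth a0 (a :: l) i.+1).
Proof. by elim: l a => [|b l IH] a //= [Rab walk] [|i] //= /IH; apply. Qed.

Lemma prop_path_inv (A : Type) (R : A -> A -> Prop) (P : A -> Prop) a0 a l :
  (forall b c, P b -> R b c -> P c) -> P a -> prop_path R a l ->
  forall i, i < size (a :: l) -> P (nth a0 (a :: l) i).
Proof.
move=> PR; elim: l a => [|b l IH] a Pa /=; first by move=> _ [].
by case=> Rab walk [|i] //= /IH; apply => //; exact: PR Rab.
Qed.

(* Membership of trees in a walk is stated with List.In, since relations have
   no decidable equality; these are its interactions with nth, map and cat. *)
Lemma In_nth (A : Type) a0 (a : A) l : List.In a l -> exists2 i, i < size l & nth a0 l i = a.
Proof.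
elim: l => [|b l IH] //= [-> | /IH[i il <-]]; first by exists 0.
by exists i.+1.
Qed.

Lemma In_map (T : eqType) (A : Type) (f : T -> A) t s : t \in s -> List.In (f t) (map f s).
Proof. by elim: s => [|t' s IH] //=; rewrite inE => /orP[/eqP-> | /IH]; [left | right]. Qed.

Lemma In_catl (A : Type) (a : A) l1 l2 : List.In a l1 -> List.In a (l1 ++ l2).
Proof. by elim: l1 => [|b l IH] //= [-> | /IH]; [left | right]. Qed.

Lemma In_catr (A : Type) (a : A) l1 l2 : List.In a l2 -> List.In a (l1 ++ l2).
Proof. by elim: l1 => [|b l IH] //= ?; right; exact: IH. Qed.

Section Pruning.
Variables (n : nat) (T0 : rel (vtx n)) (u p x y : vtx n).
Hypotheses (n2 : 2 <= n) (tree_T0 : phylo_tree T0) (nu : n <= u)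
  (T0up : T0 u p) (T0ux : T0 u x) (T0uy : T0 u y) (px : p != x) (py : p != y) (xy : x != y).

Definition pruned : rel (vtx n) := add_edge x y (del_edge u x (del_edge u y T0)).
Definition pruned_forest : rel (vtx n) := del_edge u p pruned.
Definition main_side (a : vtx n) : bool := connect pruned_forest x a.
Definition regraft (a b : vtx n) : rel (vtx n) :=
  add_edge u a (add_edge u b (del_edge a b pruned)).

Let T0_sym : symmetric T0. Proof. by case: tree_T0. Qed.
Let T0_irr : irreflexive T0. Proof. by case: tree_T0. Qed.
Let ux : u != x. Proof. exact: (adj_neq tree_T0 T0ux). Qed.
Let uy : u != y. Proof. exact: (adj_neq tree_T0 T0uy). Qed.
Let up : u != p. Proof. exact: (adj_neq tree_T0 T0up). Qed.

Lemma pruned_sym : symmetric pruned.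
Proof. exact: add_edge_sym (del_edge_sym _ _ (del_edge_sym _ _ T0_sym)). Qed.

Lemma pruned_irr : irreflexive pruned.
Proof. exact: add_edge_irr xy (del_edge_irr _ _ (del_edge_irr _ _ T0_irr)). Qed.

Lemma pruned_u z : pruned u z = (z == p).
Proof.
rewrite /pruned /add_edge /del_edge eqxx (negbTE ux) (negbTE uy) /= !orbF.
have [->|zp] := eqVneq z p; first by rewrite T0up py px.
apply/negP => /andP[/andP[T0uz zy] zx].
have := internal_neighbors tree_T0 nu T0up T0ux T0uy px py xy T0uz.
by rewrite !inE (negbTE zp) (negbTE zy) (negbTE zx).
Qed.

(* The x-side avoids u (now isolated) and p (cut off by the bridge {u,p}). *)
Lemma main_side_not_u : ~~ main_side u.
Proof.
apply/negP => xu; suff : u != u by rewrite eqxx.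
apply: (connect_invariant (D := fun z => z != u) _ _ xu); last by rewrite eq_sym.
move=> v z _; apply: contraTneq => ->.
by rewrite /pruned_forest (del_edge_sym _ _ pruned_sym) /del_edge pruned_u eqxx; case: (v == p).
Qed.

Lemma main_side_not_p : ~~ main_side p.
Proof.
apply/negP => xp; move/negP: (phylo_bridge n2 tree_T0 T0up); apply.
set f := del_edge u p T0.
have f_sym : symmetric f := del_edge_sym _ _ T0_sym.
have fux : f u x by rewrite /f /del_edge T0ux eqxx [x == p]eq_sym (negbTE px) (negbTE up).
have fuy : f u y by rewrite /f /del_edge T0uy eqxx [y == p]eq_sym (negbTE py) (negbTE up).
apply: connect_trans (connect1 fux) (connect_sub _ xp) => a b.
rewrite /pruned_forest /pruned /del_edge /add_edge => /andP[].
case/or3P=> [/andP[/andP[T0ab _] _] nup | /andP[/eqP-> /eqP->] _ | /andP[/eqP-> /eqP->] _].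
- by apply: connect1; rewrite /f /del_edge T0ab nup.
- by apply: connect_trans (connect1 _) (connect1 fuy); rewrite f_sym.
- by apply: connect_trans (connect1 _) (connect1 fux); rewrite f_sym.
Qed.

Lemma main_side_neq a : main_side a -> (a != u) && (a != p).
Proof.
move=> xa; apply/andP; split.
  by apply: contraNneq main_side_not_u => <-.
by apply: contraNneq main_side_not_p => <-.
Qed.

Lemma main_side_edge a b : main_side a -> pruned a b -> main_side b.
Proof.
move=> xa ab; case/andP: (main_side_neq xa) => au ap.
apply: connect_trans xa (connect1 _).
by rewrite /pruned_forest /del_edge ab (negbTE au) (negbTE ap).
Qed.

Lemma main_side_edge_sym a b : main_side b -> pruned a b -> main_side a.
Proof. by move=> xb ab; apply: main_side_edge xb _; rewrite pruned_sym. Qed.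

(* A vertex of the x-side with two distinct neighbours is internal: on the
   x-side, pruning does not change the neighbourhood of a leaf. *)
Lemma main_side_internal (b a c : vtx n) : main_side b -> pruned b a -> pruned b c -> a != c -> n <= b.
Proof.
move=> xb ba bc ac; rewrite leqNgt; apply/negP => bn.
suff [w only_w] : exists w, forall z, pruned b z -> z = w.
  by move: ac; rewrite (only_w _ ba) (only_w _ bc) eqxx.
have bu : b != u by case/andP: (main_side_neq xb).
have [bx | bx] := eqVneq b x.
  rewrite {}bx in bn *; exists y => z; rewrite /pruned /add_edge /del_edge eqxx [x == u]eq_sym (negbTE ux).
  rewrite (negbTE xy) /= andbT orbF => /orP[/andP[T0xz zu] | /eqP //].
  by move: zu; rewrite (leaf_neighbor_uniq tree_T0 bn T0xz (_ : T0 x u)) ?eqxx // T0_sym.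
have [byy | byy] := eqVneq b y.
  rewrite {}byy in bn *; exists x => z; rewrite /pruned /add_edge /del_edge eqxx [y == u]eq_sym (negbTE uy).
  rewrite [y == x]eq_sym (negbTE xy) /= andbT => /orP[/andP[T0yz zu] | /eqP //].
  by move: zu; rewrite (leaf_neighbor_uniq tree_T0 bn T0yz (_ : T0 y u)) ?eqxx // T0_sym.
have pruned_b z : pruned b z -> T0 b z.
  by rewrite /pruned /add_edge /del_edge (negbTE bx) (negbTE byy) /= !orbF => /andP[/andP[]].
by exists a => z /pruned_b T0bz; exact: (leaf_neighbor_uniq tree_T0 bn T0bz (pruned_b _ ba)).
Qed.

Lemma regraft_xy : regraft x y = T0.
Proof.
apply: insert_vertex_suppressed => //.
by apply/negP => T0xy; apply: (phylo_no_triangle n2 tree_T0 T0ux T0uy); rewrite T0_sym.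
Qed.

Lemma regraft_comm a b : regraft a b = regraft b a.
Proof. exact: insert_vertex_comm. Qed.

Lemma regraft_nni a b c : main_side b -> pruned a b -> pruned b c -> a != c ->
  nni (regraft a b) (regraft b c).
Proof.
move=> xb ab bc ac.
have xa := main_side_edge_sym xb ab; have xc := main_side_edge xb bc.
case/andP: (main_side_neq xb) => bu bp; case/andP: (main_side_neq xa) => au ap.
case/andP: (main_side_neq xc) => cu cp.
have a_b : a != b by apply: contraTneq ab => ->; rewrite pruned_irr.
have b_c : b != c by apply: contraTneq bc => ->; rewrite pruned_irr.
have ba : pruned b a by rewrite pruned_sym.
exists u, b, a, c; split => //.
- exact: main_side_internal xb ba bc ac.
- by rewrite /regraft /add_edge !eqxx !orbT.
- split => //; first by rewrite /regraft /add_edge !eqxx !orbT.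
  rewrite /regraft /add_edge /del_edge bc eqxx [b == a]eq_sym (negbTE a_b).
  by rewrite [c == a]eq_sym (negbTE ac).
- rewrite /regraft slide_inserted_vertex ?pruned_u ?(negbTE ap) ?(negbTE bp) ?(negbTE cp) //;
    first exact: tree_iso_refl.
  + exact: pruned_sym.
  + by rewrite eq_sym.
  + by rewrite eq_sym.
  + by rewrite eq_sym.
Qed.

(* Each edge {a,b} of the x-side is represented once, as (a, b) with a < b. *)
Definition edge_key (a b : vtx n) : vtx n * vtx n := if a < b then (a, b) else (b, a).
Definition slots : {set vtx n * vtx n} :=
  [set q | [&& pruned q.1 q.2, main_side q.1 & q.1 < q.2]].
Definition share_end (q1 q2 : vtx n * vtx n) : bool :=
  [|| q1.1 == q2.1, q1.1 == q2.2, q1.2 == q2.1 | q1.2 == q2.2].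
Definition slot_adj (q1 q2 : vtx n * vtx n) : bool :=
  [&& q1 \in slots, q2 \in slots, q1 != q2 & share_end q1 q2].

Lemma edge_key_sym a b : edge_key a b = edge_key b a.
Proof. by rewrite /edge_key; case: ltngtP => // /val_inj->. Qed.

Lemma edge_key_ends z a b :
  (z == (edge_key a b).1) || (z == (edge_key a b).2) = (z == a) || (z == b).
Proof. by rewrite /edge_key; case: (a < b) => //=; rewrite orbC. Qed.

Lemma regraft_key a b : regraft (edge_key a b).1 (edge_key a b).2 = regraft a b.
Proof. by rewrite /edge_key; case: (a < b); rewrite // regraft_comm. Qed.

Lemma edge_key_slot a b : pruned a b -> main_side a -> edge_key a b \in slots.
Proof.
move=> ab xa; rewrite /edge_key inE; case: ltngtP => /= [lt_ab | lt_ba | /val_inj abE].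
- by rewrite ab xa.
- by rewrite pruned_sym ab (main_side_edge xa ab).
- by move: ab; rewrite abE pruned_irr.
Qed.

Lemma edge_key_neq a b c : a != b -> a != c -> edge_key a b != edge_key b c.
Proof.
move=> ab ac; apply/negP => /eqP keyE.
by have := edge_key_ends a a b; rewrite keyE edge_key_ends eqxx /= (negbTE ab) (negbTE ac).
Qed.

Lemma edge_key_share a b c : share_end (edge_key a b) (edge_key b c).
Proof.
have := edge_key_ends b a b; have := edge_key_ends b b c; rewrite eqxx orbT /share_end.
by case/orP=> /eqP <-; case/orP=> /eqP <-; rewrite eqxx ?orbT.
Qed.

Lemma slot_adj_sym : symmetric slot_adj.
Proof.
move=> q1 q2; rewrite /slot_adj /share_end [q2 == q1]eq_sym [q2.1 == _]eq_sym.
rewrite [q2.1 == q1.2]eq_sym [q2.2 == q1.1]eq_sym [q2.2 == q1.2]eq_sym.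
by case: (q1 \in slots); case: (q2 \in slots); case: (q1 == q2);
  case: (q1.1 == q2.1); case: (q1.1 == q2.2); case: (q1.2 == q2.1); case: (q1.2 == q2.2).
Qed.

Lemma slot_adj_nni q1 q2 : slot_adj q1 q2 -> nni (regraft q1.1 q1.2) (regraft q2.1 q2.2).
Proof.
case: q1 q2 => [a1 b1] [a2 b2] /and4P[].
rewrite !inE /= => /and3P[ab1 x1 lt1] /and3P[ab2 x2 lt2] neq.
rewrite /share_end /= => /or4P[/eqP E | /eqP E | /eqP E | /eqP E].
- subst a2; rewrite regraft_comm; apply: regraft_nni => //; first by rewrite pruned_sym.
  by apply: contraNneq neq => ->.
- subst b2; rewrite regraft_comm [regraft a2 a1]regraft_comm.
  apply: regraft_nni => //; try by rewrite pruned_sym.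
  by apply/eqP => E; move: (ltn_trans lt2 lt1); rewrite E ltnn.
- subst a2; apply: regraft_nni => //.
  by apply/eqP => E; move: (ltn_trans lt1 lt2); rewrite E ltnn.
- subst b2; rewrite [regraft a2 b1]regraft_comm; apply: regraft_nni => //.
  + exact: main_side_edge x1 ab1.
  + by rewrite pruned_sym.
  + by apply: contraNneq neq => ->.
Qed.

(* The line graph of the x-side is connected from the slot {x,y}: propagate,
   along the x-side, the property that all edges at a vertex are reachable. *)
Lemma slots_connected q : q \in slots -> connect slot_adj (edge_key x y) q.
Proof.
have xy_slot : edge_key x y \in slots.
  by apply: edge_key_slot; [rewrite /pruned /add_edge !eqxx orbT | exact: connect0].
pose D := [pred z | main_side z && [forall w, pruned z w ==> connect slot_adj (edge_key x y) (edge_key z w)]].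
suff all_D z : main_side z -> D z.
  case: q => a b; rewrite inE /= => /and3P[ab xa lt_ab].
  by case/andP: (all_D a xa) => _ /forallP/(_ b); rewrite ab /edge_key lt_ab.
move=> xz; apply: (connect_invariant (D := D) _ _ xz).
  move=> v z' /andP[xv /forallP reach_v] /andP[vz' _].
  have xz' := main_side_edge xv vz'.
  rewrite /D /= xz'; apply/forallP => w; apply/implyP => z'w.
  have {reach_v} := implyP (reach_v z') vz'.
  have [-> | wv] := eqVneq w v; first by rewrite [edge_key z' v]edge_key_sym.
  move/connect_trans; apply; apply: connect1.
  have vz'_neq : v != z' by apply: contraTneq vz' => ->; rewrite pruned_irr.
  rewrite /slot_adj !edge_key_slot // edge_key_share edge_key_neq //.
  by rewrite eq_sym.
rewrite /D inE /main_side connect0 /=; apply/forallP => w; apply/implyP => xw.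
have [-> | wy] := eqVneq w y; first exact: connect0.
apply: connect1; rewrite /slot_adj xy_slot edge_key_slot ?connect0 //=.
rewrite [edge_key x y]edge_key_sym edge_key_neq ?edge_key_share //; try by rewrite eq_sym.
exact: connect0.
Qed.

(* At most 4n slots: they are arcs of the pruned tree, which has two more
   arcs than T0 at most. *)
Lemma card_slots : #|slots| <= 4 * n.
Proof.
apply: (@leq_trans #|arcs pruned|).
  by apply: subset_leq_card; apply/subsetP => q; rewrite !inE => /and3P[].
apply: (@leq_trans #|arcs T0 :|: [set (x, y); (y, x)]|).
  apply: subset_leq_card; apply/subsetP => -[a b]; rewrite !inE /pruned /add_edge /del_edge /=.
  by case/or3P=> [/andP[/andP[-> _] _] | /andP[/eqP-> /eqP->] | /andP[/eqP-> /eqP->]];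
    rewrite ?eqxx ?orbT.
apply: leq_trans (leq_card_setU _ _) _.
rewrite card_arcs_phylo // cards2; have := n2.
by case: (_ != _) => /=; lia.
Qed.

Lemma pruning_walk : exists l : seq (rel (vtx n)),
  [/\ prop_path (@nni n) T0 l, last T0 l = T0, size l <= 8 * n &
      forall a b, pruned a b -> main_side a -> List.In (regraft a b) (T0 :: l)].
Proof.
have xy_slot : edge_key x y \in slots.
  by apply: edge_key_slot; [rewrite /pruned /add_edge !eqxx orbT | exact: connect0].
have slots_closed q1 q2 : q1 \in slots -> slot_adj q1 q2 -> q2 \in slots.
  by move=> _ /and4P[].
have [l [walk_l last_l size_l cover_l]] :=
  closed_cover_walk slot_adj_sym slots_connected slots_closed xy_slot.
pose tree_of (q : vtx n * vtx n) := regraft q.1 q.2.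
have start : tree_of (edge_key x y) = T0 by rewrite /tree_of regraft_key regraft_xy.
exists (map tree_of l); split.
- rewrite -start; elim: l (edge_key x y) walk_l {last_l size_l cover_l} => //= q l IH q0.
  by case/andP=> adj walk; split; [exact: slot_adj_nni | exact: IH].
- by rewrite -start last_map last_l.
- rewrite size_map; apply: leq_trans size_l _.
  have := card_slots; move: #|slots| => k; lia.
- move=> a b ab xa; rewrite -regraft_key -/(tree_of _) -start -/(map tree_of (_ :: l)).
  exact/In_map/cover_l/edge_key_slot.
Qed.

End Pruning.

(* A pruning of T0 is an internal vertex u with its three neighbours: the
   subtree on the p side is moved, x and y are joined. *)
Definition pruning (n : nat) := (vtx n * vtx n * vtx n * vtx n)%type.

Definition valid_pruning (n : nat) (T0 : rel (vtx n)) (q : pruning n) : bool :=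
  let: (u, p, x, y) := q in [&& n <= u, T0 u p, T0 u x, T0 u y, p != x, p != y & x != y].

Lemma prunings_walk n (T0 : rel (vtx n)) (L : seq (pruning n)) :
  2 <= n -> phylo_tree T0 -> all (valid_pruning T0) L ->
  exists l : seq (rel (vtx n)),
    [/\ prop_path (@nni n) T0 l, last T0 l = T0, size l <= 8 * n * size L &
        forall u p x y, (u, p, x, y) \in L -> forall a b,
          pruned T0 u x y a b -> main_side T0 u p x y a ->
          List.In (regraft T0 u x y a b) (T0 :: l)].
Proof.
move=> n2 tree_T0; elim: L => [|[[[u p] x] y] L IH] /=; first by exists [::].
case/andP=> /and5P[nu T0up T0ux T0uy /and3P[px py xy]] /IH[l [walk_l last_l size_l cover_l]].
have [l1 [walk1 last1 size1 cover1]] := pruning_walk n2 tree_T0 nu T0up T0ux T0uy px py xy.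
exists (l1 ++ l); split.
- by apply: prop_path_cat; rewrite ?last1.
- by rewrite last_cat last1.
- by rewrite size_cat mulnS leq_add.
move=> u' p' x' y'; rewrite inE => /orP[/eqP[-> -> -> ->] | inL] a b ab xa.
  by case: (cover1 a b ab xa) => [<- | in1]; [left | right; exact: In_catl].
by case: (cover_l _ _ _ _ inL a b ab xa) => [<- | in2]; [left | right; exact: In_catr].
Qed.

Definition neighbors n (T0 : rel (vtx n)) (u : vtx n) : seq (vtx n) := enum [pred w | T0 u w].

Definition candidate_prunings n (T0 : rel (vtx n)) : seq (pruning n) :=
  flatten [seq flatten [seq flatten [seq [seq (u, p, x, y) | y <- neighbors T0 u]
    | x <- neighbors T0 u] | p <- neighbors T0 u] | u <- enum (vtx n)].

Lemma size_flatten_map_le (A B : Type) (f : A -> seq B) s k :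
  (forall a, size (f a) <= k) -> size (flatten (map f s)) <= k * size s.
Proof. by move=> fk; elim: s => //= a s IH; rewrite size_cat mulnS leq_add. Qed.

Lemma size_candidate_prunings n (T0 : rel (vtx n)) :
  phylo_tree T0 -> size (candidate_prunings T0) <= 27 * V n.
Proof.
case=> _ _ T0_deg _.
have le3 u : size (neighbors T0 u) <= 3.
  by rewrite /neighbors -cardE -/(deg T0 u) T0_deg; case: (u < n).
rewrite -[in X in _ <= _ * X](size_enum_ord (V n)); apply: size_flatten_map_le => u.
apply: (@leq_trans (9 * size (neighbors T0 u))); last by rewrite -[27]/(9 * 3) leq_mul2l le3.
apply: size_flatten_map_le => p.
apply: (@leq_trans (3 * size (neighbors T0 u))); last by rewrite -[9]/(3 * 3) leq_mul2l le3.
by apply: size_flatten_map_le => x; rewrite size_map le3.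
Qed.

Lemma mem_candidate_prunings n (T0 : rel (vtx n)) u p x y :
  T0 u p -> T0 u x -> T0 u y -> (u, p, x, y) \in candidate_prunings T0.
Proof.
move=> T0up T0ux T0uy; apply/flatten_mapP; exists u; first by rewrite mem_enum.
apply/flatten_mapP; exists p; first by rewrite mem_enum.
apply/flatten_mapP; exists x; first by rewrite mem_enum.
by apply: map_f; rewrite mem_enum.
Qed.

Theorem mainTheorem2 :
  exists C : nat, forall (n : nat) (T0 : rel (vtx n)),
    (2 <= n)%N -> phylo_tree T0 ->
    exists w : seq (rel (vtx n)),
      [/\ nni_walk w, ((size w).-1 <= C * n ^ 2)%N &
          (forall T, in_spr_nbhd T0 T -> visits w T)].
Proof.
exists 432 => n T0 n2 tree_T0.
set L := filter (valid_pruning T0) (candidate_prunings T0).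
have [l [walk_l _ size_l cover_l]] := prunings_walk n2 tree_T0 (filter_all _ _ : all _ L).
exists (T0 :: l); split.
- split=> //; split=> i i_lt; last exact: prop_path_nth walk_l i i_lt.
  apply: (prop_path_inv _ _ tree_T0 walk_l i_lt) => T T' tree_T.
  exact: nni_phylo n2 tree_T.
- have le_L : size L <= 54 * n.
    rewrite size_filter; apply: leq_trans (count_size _ _) _.
    by apply: leq_trans (size_candidate_prunings tree_T0) _; rewrite /V; lia.
  apply: leq_trans size_l _; move: le_L; move: (size L) => k; nia.
- move=> T [u [p [x [y [a [b spr_T]]]]]].
  case: spr_T => nu [T0up T0ux T0uy] [px py xy] [ab xa] iso.
  have uL : (u, p, x, y) \in L.
    rewrite mem_filter mem_candidate_prunings // andbT.
    by apply/and5P; split => //; apply/and3P.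
  have [i i_lt nth_i] := In_nth (fun _ _ => false) (cover_l u p x y uL a b ab xa).
  by exists i; rewrite // nth_i.
Qed.
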